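(* For causal stable systems $P_1,P_2:\mathcal{L}_{2e+}^n\to\mathcal{L}_{2e+}^n$, the cascaded system $P=P_2P_1$ satisfies $$\theta(P)\le\theta(P_1)+\theta(P_2).$$
   Context: For $n\ge1$, $\mathcal{L}_2^n$ is the set of measurable $u:\mathbb{R}\to\mathbb{R}^n$ with $\|u\|_2^2=\int_{-\infty}^{\infty}|u(t)|^2dt<\infty$, with inner product $\langle u,v\rangle=\int u(t)^Tv(t)\,dt$; $\mathcal{L}_{2+}=\{u\in\mathcal{L}_2: u(t)=0\ \text{for}\ t<0\}$. For $T\ge0$, $(\Gamma_Tu)(t)=u(t)$ for $t\le T$ and $0$ for $t>T$; $\mathcal{L}_{2e+}=\{u: \Gamma_Tu\in\mathcal{L}_{2+}\ \forall T\ge0\}$. A system is an operator $P:\mathcal{L}_{2e+}\to\mathcal{L}_{2e+}$ with $P0=0$, $P\ne0$; it is causal if $\Gamma_TP=\Gamma_TP\Gamma_T$ for all $T\ge0$, and a causal system is stable if $Pu\in\mathcal{L}_{2+}$ for all $u\in\mathcal{L}_{2+}$ and $\sup_{0\ne u\in\mathcal{L}_{2+}}\|Pu\|_2/\|u\|_2<\infty$. The singular angle of a causal stable system $P$ is $\theta(P)\in[0,\pi]$ with $\cos\theta(P)=\inf\{\langle u,Pu\rangle/(\|u\|_2\|Pu\|_2): 0\neq u\in\mathcal{L}_{2+},\ Pu\neq0\}$. *)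

From HB Require Import structures.
From mathcomp Require Import all_boot all_order all_algebra.
From mathcomp Require Import all_classical all_reals all_analysis.
Set Implicit Arguments. Unset Strict Implicit. Unset Printing Implicit Defensive.
Import Order.TTheory GRing.Theory Num.Theory.
Import numFieldNormedType.Exports.
Local Open Scope classical_set_scope.
Local Open Scope ring_scope.

Section Signals.
Variables (R : realType) (n : nat).

Definition signal := R -> 'rV[R]_n.

Notation mu := (@lebesgue_measure R).

Definition sqnorm (x : 'rV[R]_n) : R := \sum_(i < n) x ord0 i ^+ 2.
Definition dotv (x y : 'rV[R]_n) : R := \sum_(i < n) x ord0 i * y ord0 i.

Definition ae_equal (u v : signal) : Prop := {ae mu, forall t, u t = v t}.

Definition in_L2 (u : signal) : Prop :=
  (forall i : 'I_n, measurable_fun setT (fun t => u t ord0 i)) /\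
  (\int[mu]_t (sqnorm (u t))%:E < +oo)%E.

Definition in_L2p (u : signal) : Prop :=
  in_L2 u /\ {ae mu, forall t, t < 0 -> u t = 0}.

Definition Gam (T : R) (u : signal) : signal :=
  fun t => if t <= T then u t else 0.

Definition in_L2ep (u : signal) : Prop :=
  forall T, 0 <= T -> in_L2p (Gam T u).

Definition l2norm (u : signal) : R := Num.sqrt (Rintegral mu setT (fun t => sqnorm (u t))).
Definition l2inner (u v : signal) : R := Rintegral mu setT (fun t => dotv (u t) (v t)).

(* A system: an operator on L2e+^n (well defined on a.e.-classes), with P0 = 0, P <> 0. *)
Definition is_system (P : signal -> signal) : Prop :=
  (forall u, in_L2ep u -> in_L2ep (P u)) /\
  (forall u v, in_L2ep u -> in_L2ep v -> ae_equal u v -> ae_equal (P u) (P v)) /\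
  ae_equal (P (fun _ => 0)) (fun _ => 0) /\
  (exists u, in_L2ep u /\ ~ ae_equal (P u) (fun _ => 0)).

Definition causal (P : signal -> signal) : Prop :=
  forall u, in_L2ep u -> forall T, 0 <= T ->
    ae_equal (Gam T (P u)) (Gam T (P (Gam T u))).

Definition stable (P : signal -> signal) : Prop :=
  (forall u, in_L2p u -> in_L2p (P u)) /\
  (exists c : R, forall u, in_L2p u -> l2norm u != 0 ->
      l2norm (P u) / l2norm u <= c).

Definition causal_stable_system (P : signal -> signal) : Prop :=
  [/\ is_system P, causal P & stable P].

Definition singular_angle (P : signal -> signal) : R :=
  acos (inf [set l2inner u (P u) / (l2norm u * l2norm (P u)) |
             u in [set u | in_L2p u /\ l2norm u != 0 /\ l2norm (P u) != 0]]).

End Signals.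

(* For u
   in the domain of P2 P1 the Gram matrix of u, P1 u, P2 P1 u is positive
   semidefinite, which yields the spherical triangle inequality
   ∠(u, P2 P1 u) <= ∠(u, P1 u) + ∠(P1 u, P2 P1 u) <= θ(P1) + θ(P2).
   Causality makes the set defining θ(P2 P1) nonempty: a nonzero output already
   shows up on a finite horizon, hence for a truncated, square-integrable input. *)

From HB Require Import structures.
From mathcomp Require Import all_boot all_order all_algebra.
From mathcomp Require Import all_classical all_reals all_analysis.
From mathcomp Require Import ring lra.
Set Implicit Arguments. Unset Strict Implicit. Unset Printing Implicit Defensive.
Import Order.TTheory GRing.Theory Num.Theory.
Local Open Scope classical_set_scope.
Local Open Scope ring_scope.

Section Angles.
Variable R : realType.

Lemma quad_ge0_discriminant (A B C : R) : 0 <= A -> 0 <= C ->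
  (forall k l, 0 <= A * k ^+ 2 + 2 * B * k * l + C * l ^+ 2) -> B ^+ 2 <= A * C.
Proof.
move=> A_ge0 C_ge0 Q.
have [A_gt0|A_le0] := ltrP 0 A; first by have := Q (- B) A; nra.
have [C_gt0|C_le0] := ltrP 0 C; first by have := Q C (- B); nra.
have := Q 1 (- B); nra.
Qed.

Lemma ler_acos (x y : R) : -1 <= x -> x <= y -> y <= 1 -> acos y <= acos x.
Proof.
move=> x_ge xy y_le.
have x_in : -1 <= x <= 1 by rewrite x_ge (le_trans xy y_le).
have y_in : -1 <= y <= 1 by rewrite y_le (le_trans x_ge xy).
have acos_in z : -1 <= z <= 1 -> acos z \in `[0, pi].
  by move=> z_in; rewrite in_itv /= acos_ge0 ?acos_lepi.
by rewrite leNgt -ltr_cos ?acos_in // !acosK ?in_itv //= -leNgt.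
Qed.

Lemma acos_le_acos_cos (x s : R) : -1 <= x <= 1 -> 0 <= s ->
  cos s <= x -> acos x <= s.
Proof.
move=> /andP[x_ge x_le] s_ge0 cos_le.
have [pi_le|] := boolP (pi <= s); first by apply: le_trans pi_le; rewrite acos_lepi ?x_ge.
rewrite -ltNge => s_lt.
have s_in : s \in `[0, pi] by rewrite in_itv /= s_ge0 ltW.
rewrite -[leRHS](cosK s_in).
exact: ler_acos (cos_geN1 _) cos_le x_le.
Qed.

(* [(1 - x^2) k^2 + 2 (z - x y) k l + (1 - y^2) l^2] is the squared norm of
   [k e1 - (k x + l y) e2 + l e3] for unit vectors with [<e1,e2> = x],
   [<e2,e3> = y], [<e1,e3> = z]. *)
Lemma cos_add_acos_le (x y z : R) : -1 <= x <= 1 -> -1 <= y <= 1 ->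
  (forall k l, 0 <= (1 - x ^+ 2) * k ^+ 2 + 2 * (z - x * y) * k * l + (1 - y ^+ 2) * l ^+ 2) ->
  cos (acos x + acos y) <= z.
Proof.
move=> x_in y_in Q.
rewrite cosD !acosK ?in_itv //= !sin_acos // -sqrtrM; last by nra.
have x2_le1 : 0 <= 1 - x ^+ 2 by nra.
have y2_le1 : 0 <= 1 - y ^+ 2 by nra.
have disc := quad_ge0_discriminant x2_le1 y2_le1 Q.
have : `|z - x * y| <= Num.sqrt ((1 - x ^+ 2) * (1 - y ^+ 2)).
  by rewrite -sqrtr_sqr ler_sqrt // mulr_ge0 //; nra.
have : - (z - x * y) <= `|z - x * y| by rewrite -normrN ler_norm.
lra.
Qed.

Definition gram_cos (g11 g22 g12 : R) := g12 / (Num.sqrt g11 * Num.sqrt g22).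

Lemma gram_cos_bound (g11 g22 g12 : R) : 0 < g11 -> 0 < g22 ->
  (forall p q, 0 <= p ^+ 2 * g11 + q ^+ 2 * g22 + 2 * p * q * g12) ->
  -1 <= gram_cos g11 g22 g12 <= 1.
Proof.
move=> g11_gt0 g22_gt0 Q; rewrite /gram_cos.
set a := Num.sqrt g11; set b := Num.sqrt g22.
have a_gt0 : 0 < a by rewrite sqrtr_gt0.
have b_gt0 : 0 < b by rewrite sqrtr_gt0.
have Q1 k l : 0 <= 1 * k ^+ 2 + 2 * (g12 / (a * b)) * k * l + 1 * l ^+ 2.
  have := Q (k / a) (l / b); congr (_ <= _).
  rewrite -(sqr_sqrtr (ltW g11_gt0)) -(sqr_sqrtr (ltW g22_gt0)) -/a -/b.
  by field; rewrite !gt_eqF.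
have := quad_ge0_discriminant ler01 ler01 Q1.
rewrite mulr1; nra.
Qed.

Lemma gram_angle_triangle (g11 g22 g33 g12 g23 g13 : R) :
  0 < g11 -> 0 < g22 -> 0 < g33 ->
  (forall p q r, 0 <= p ^+ 2 * g11 + q ^+ 2 * g22 + r ^+ 2 * g33
     + 2 * p * q * g12 + 2 * q * r * g23 + 2 * p * r * g13) ->
  acos (gram_cos g11 g33 g13) <= acos (gram_cos g11 g22 g12) + acos (gram_cos g22 g33 g23).
Proof.
move=> g11_gt0 g22_gt0 g33_gt0 Q.
have x_in : -1 <= gram_cos g11 g22 g12 <= 1.
  apply: gram_cos_bound => // p q; have := Q p q 0.
  by rewrite !(expr0n, mul0r, mulr0, addr0).
have y_in : -1 <= gram_cos g22 g33 g23 <= 1.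
  apply: gram_cos_bound => // p q; have := Q 0 p q.
  by rewrite !(expr0n, mul0r, mulr0, addr0, add0r).
have z_in : -1 <= gram_cos g11 g33 g13 <= 1.
  apply: gram_cos_bound => // p q; have := Q p 0 q.
  by rewrite !(expr0n, mul0r, mulr0, addr0, add0r).
apply: acos_le_acos_cos; rewrite ?addr_ge0 ?acos_ge0 //.
apply: cos_add_acos_le => // k l.
set a := Num.sqrt g11; set b := Num.sqrt g22; set c := Num.sqrt g33.
have [a_gt0 b_gt0 c_gt0] : [/\ 0 < a, 0 < b & 0 < c] by rewrite !sqrtr_gt0.
have := Q (k / a) ((- k * (g12 / (a * b)) - l * (g23 / (b * c))) / b) (l / c).
rewrite /gram_cos -/a -/b -/c; congr (_ <= _).
rewrite -(sqr_sqrtr (ltW g11_gt0)) -(sqr_sqrtr (ltW g22_gt0)) -(sqr_sqrtr (ltW g33_gt0)).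
rewrite -/a -/b -/c.
by field; rewrite !gt_eqF.
Qed.

End Angles.

Section AcosInf.
Variables (R : realType) (S : set R).
Hypothesis S_unit : forall y, S y -> -1 <= y <= 1.

Lemma inf_unit_itv : S !=set0 -> -1 <= inf S <= 1.
Proof.
move=> [z Sz]; apply/andP; split; first by apply: lb_le_inf; [exists z | move=> y /S_unit /andP[]].
apply: le_trans (ge_inf _ Sz) _; last by case/andP: (S_unit Sz).
by exists (-1) => y /S_unit /andP[].
Qed.

Lemma acos_le_acos_inf z : S z -> acos z <= acos (inf S).
Proof.
move=> Sz; have /andP[inf_ge _] := inf_unit_itv (ex_intro _ z Sz).
apply: ler_acos inf_ge _ _; last by case/andP: (S_unit Sz).
by apply: ge_inf Sz; exists (-1) => y /S_unit /andP[].
Qed.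

Lemma acos_inf_le c : S !=set0 -> (forall y, S y -> acos y <= c) -> acos (inf S) <= c.
Proof.
move=> [z Sz] acos_le; have inf_in := inf_unit_itv (ex_intro _ z Sz).
have c_ge0 : 0 <= c by apply: le_trans (acos_le z Sz); rewrite acos_ge0 ?S_unit.
have [pi_le|] := boolP (pi <= c); first by apply: le_trans pi_le; rewrite acos_lepi.
rewrite -ltNge => c_lt_pi.
have c_in : c \in `[0, pi] by rewrite in_itv /= c_ge0 ltW.
apply: acos_le_acos_cos => //; apply: lb_le_inf; first by exists z.
move=> y Sy; have y_in := S_unit Sy.
have acos_y_in : acos y \in `[0, pi] by rewrite in_itv /= acos_ge0 ?acos_lepi.
by rewrite leNgt -{1}(acosK y_in) ltr_cos // -leNgt acos_le.
Qed.
End AcosInf.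

Section Signals.
Variables (R : realType) (n : nat).
Notation mu := (@lebesgue_measure R).
Notation sig := (signal R n).
Implicit Types (u v w : sig) (x y : 'rV[R]_n).

#[local] Instance ae_mu_filter : Filter (almost_everywhere mu) :=
  ae_filter_ringOfSetsType mu.

Lemma sqnorm_ge0 x : 0 <= sqnorm x.
Proof. by apply: sumr_ge0 => i _; rewrite sqr_ge0. Qed.

Lemma dotvv x : dotv x x = sqnorm x.
Proof. by apply: eq_bigr => i _; rewrite expr2. Qed.

Lemma sqnorm0 : sqnorm (0 : 'rV[R]_n) = 0.
Proof. by rewrite /sqnorm big1 // => i _; rewrite mxE expr0n. Qed.

Lemma sqnorm_eq0 x : sqnorm x = 0 -> x = 0.
Proof.
move=> x0; apply/matrixP => i j; rewrite (ord1 i) mxE.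
have /eqP := @psumr_eq0P _ _ predT _ (fun j _ => sqr_ge0 (x ord0 j)) x0 j isT.
by rewrite sqrf_eq0 => /eqP.
Qed.

Lemma normr_dotv_le x y : `|dotv x y| <= sqnorm x + sqnorm y.
Proof.
rewrite /dotv /sqnorm -big_split /=; apply: le_trans (ler_norm_sum _ _ _) _.
apply: ler_sum => i _; rewrite normrM -(real_normK (num_real (x _ _))).
rewrite -(real_normK (num_real (y _ _))); nra.
Qed.

Lemma measurable_dotv u v :
  (forall i, measurable_fun setT (fun t => u t ord0 i)) ->
  (forall i, measurable_fun setT (fun t => v t ord0 i)) ->
  measurable_fun setT (fun t => dotv (u t) (v t)).
Proof.
move=> mu_i mv_i; apply: measurable_sum => i.
exact: measurable_realfun.measurable_funM.
Qed.

Lemma measurable_sqnorm u : (forall i, measurable_fun setT (fun t => u t ord0 i)) ->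
  measurable_fun setT (fun t => sqnorm (u t)).
Proof.
move=> mu_i; have -> : (fun t => sqnorm (u t)) = fun t => dotv (u t) (u t).
  by apply/funext => t; rewrite dotvv.
exact: measurable_dotv.
Qed.

Lemma integrable_sqnorm u : in_L2 u -> mu.-integrable setT (EFin \o fun t => sqnorm (u t)).
Proof.
move=> [mu_i fin]; apply/integrableP; split.
  by apply/measurable_realfun.measurable_EFinP; exact: measurable_sqnorm.
by under eq_integral do rewrite /= ger0_norm ?sqnorm_ge0 //.
Qed.

Lemma integrable_dotv u v : in_L2 u -> in_L2 v ->
  mu.-integrable setT (EFin \o fun t => dotv (u t) (v t)).
Proof.
move=> hu hv.
apply: (le_integrable measurableT _ _
  (integrableD measurableT (integrable_sqnorm hu) (integrable_sqnorm hv))).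
  by apply/measurable_realfun.measurable_EFinP; apply: measurable_dotv; [case: hu | case: hv].
move=> t _ /=; rewrite lee_fin (ger0_norm (addr_ge0 (sqnorm_ge0 _) (sqnorm_ge0 _))).
exact: normr_dotv_le.
Qed.

Lemma integrable_EFinD (f g : R -> R) : mu.-integrable setT (EFin \o f) ->
  mu.-integrable setT (EFin \o g) -> mu.-integrable setT (EFin \o fun t => f t + g t).
Proof. exact: integrableD. Qed.

Lemma integrable_EFinZ k (f : R -> R) : mu.-integrable setT (EFin \o f) ->
  mu.-integrable setT (EFin \o fun t => k * f t).
Proof. exact: integrableZl. Qed.

Lemma l2inner_gram u1 u2 u3 : in_L2 u1 -> in_L2 u2 -> in_L2 u3 ->
  forall p q r, 0 <= p ^+ 2 * l2inner u1 u1 + q ^+ 2 * l2inner u2 u2 + r ^+ 2 * l2inner u3 u3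
    + 2 * p * q * l2inner u1 u2 + 2 * q * r * l2inner u2 u3 + 2 * p * r * l2inner u1 u3.
Proof.
move=> h1 h2 h3 p q r.
have i11 := integrable_dotv h1 h1; have i22 := integrable_dotv h2 h2.
have i33 := integrable_dotv h3 h3; have i12 := integrable_dotv h1 h2.
have i23 := integrable_dotv h2 h3; have i13 := integrable_dotv h1 h3.
rewrite /l2inner -!RintegralZl // -!RintegralD //;
  try by repeat apply: integrable_EFinD => //; apply: integrable_EFinZ.
apply: Rintegral_ge0 => t _; rewrite /dotv !mulr_sumr -!big_split /=.
apply: sumr_ge0 => i _.
set a := u1 t ord0 i; set b := u2 t ord0 i; set c := u3 t ord0 i.
rewrite (_ : _ + _ = (p * a + q * b + r * c) ^+ 2); first exact: sqr_ge0.
ring.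
Qed.

Lemma l2normE u : l2norm u = Num.sqrt (l2inner u u).
Proof. by congr Num.sqrt; apply: eq_Rintegral => t _; rewrite dotvv. Qed.

Lemma l2inner_gt0 u : l2norm u != 0 -> 0 < l2inner u u.
Proof. by rewrite l2normE sqrtr_eq0 -ltNge. Qed.

Lemma ae_equal_sym u v : ae_equal u v -> ae_equal v u.
Proof. by apply: filterS => t ->. Qed.

Lemma ae_equal_trans u v w : ae_equal u v -> ae_equal v w -> ae_equal u w.
Proof. by apply: filterS2 => t ->. Qed.

Lemma l2norm_eq0 v : in_L2 v -> l2norm v = 0 <-> ae_equal v (fun _ => 0).
Proof.
move=> hv; have /integrableP[m_sq _] := integrable_sqnorm hv.
have int_sq : (\int[mu]_t (sqnorm (v t))%:E)%E = (Rintegral mu setT (fun t => sqnorm (v t)))%:E.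
  rewrite fineK // ge0_fin_numE; first by case: hv.
  by apply: integral_ge0 => t _; rewrite lee_fin sqnorm_ge0.
split => [v0|].
- have sq0 : Rintegral mu setT (fun t => sqnorm (v t)) = 0.
    apply/eqP; rewrite eq_le -sqrtr_eq0 -/(l2norm v) v0 eqxx /=.
    by apply: Rintegral_ge0 => t _; exact: sqnorm_ge0.
  have : ae_eq mu setT (EFin \o fun t => sqnorm (v t)) (cst 0%E).
    apply/(ae_eq_integral_abs mu measurableT m_sq); rewrite -[0%E]/(0%:E) -sq0 -int_sq.
    by apply: eq_integral => t _ /=; rewrite ger0_norm ?sqnorm_ge0.
  by apply: filterS => t /= /(_ I) [] /sqnorm_eq0.
- move=> v_ae0; rewrite /l2norm /Rintegral (ae_eq_integral (cst 0%E)) //.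
    by rewrite integral0 /= sqrtr0.
  by move: v_ae0; apply: filterS => t /= -> _; rewrite sqnorm0.
Qed.

Definition cos_angle u v := l2inner u v / (l2norm u * l2norm v).

Lemma cos_angleE u v : cos_angle u v = gram_cos (l2inner u u) (l2inner v v) (l2inner u v).
Proof. by rewrite /cos_angle /gram_cos !l2normE. Qed.

Lemma cos_angle_bound u v : in_L2 u -> in_L2 v -> l2norm u != 0 -> l2norm v != 0 ->
  -1 <= cos_angle u v <= 1.
Proof.
move=> hu hv u_neq0 v_neq0; rewrite cos_angleE.
apply: gram_cos_bound; rewrite ?l2inner_gt0 // => p q.
by have := l2inner_gram hu hv hu p q 0; rewrite !(expr0n, mul0r, mulr0, addr0).
Qed.

Lemma angle_triangle u1 u2 u3 : in_L2 u1 -> in_L2 u2 -> in_L2 u3 ->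
  l2norm u1 != 0 -> l2norm u2 != 0 -> l2norm u3 != 0 ->
  acos (cos_angle u1 u3) <= acos (cos_angle u1 u2) + acos (cos_angle u2 u3).
Proof.
move=> h1 h2 h3 n1 n2 n3; rewrite !cos_angleE.
by apply: gram_angle_triangle; rewrite ?l2inner_gt0 //; exact: l2inner_gram.
Qed.

Lemma ae_equal_Gam T u v : ae_equal u v -> ae_equal (Gam T u) (Gam T v).
Proof. by apply: filterS => t /= uv; rewrite /Gam uv. Qed.

Lemma Gam0 T : Gam T (fun _ => 0) = fun _ : R => 0 :> 'rV[R]_n.
Proof. by apply/funext => t; rewrite /Gam; case: ifP. Qed.

Lemma in_L2p_Gam T v : in_L2p v -> in_L2p (Gam T v).
Proof.
move=> [[mv fin] v_ae0].
have mG i : measurable_fun setT (fun t => Gam T v t ord0 i).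
  have -> : (fun t => Gam T v t ord0 i) = fun t => if t <= T then v t ord0 i else 0.
    by apply/funext => t; rewrite /Gam; case: ifP; rewrite ?mxE.
  apply: measurable_fun_ifT => //.
  exact: (measurable_realfun.measurable_fun_ler (@measurable_id _ R setT) (measurable_cst T)).
split; [split => //|].
  apply: le_lt_trans fin; apply: ge0_le_integral => //.
  - by move=> t _; rewrite lee_fin sqnorm_ge0.
  - by apply/measurable_realfun.measurable_EFinP; exact: measurable_sqnorm.
  - by apply/measurable_realfun.measurable_EFinP; exact: measurable_sqnorm.
  - by move=> t _; rewrite lee_fin /Gam; case: ifP; rewrite ?sqnorm0 ?sqnorm_ge0.
by move: v_ae0; apply: filterS => t /= v0 t_lt0; rewrite /Gam v0 //; case: ifP.
Qed.

Lemma in_L2p_L2ep v : in_L2p v -> in_L2ep v.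
Proof. by move=> hv T _; exact: in_L2p_Gam. Qed.

Lemma in_L2ep_Gam T v : 0 <= T -> in_L2ep v -> in_L2ep (Gam T v).
Proof. by move=> T_ge0 hv; apply: in_L2p_L2ep; exact: hv. Qed.

Lemma in_L2ep0 : in_L2ep (fun _ : R => 0 : 'rV[R]_n).
Proof.
move=> T _; rewrite Gam0; split; [split|].
- by move=> i; under eq_fun do rewrite mxE; exact: measurable_cst.
- by under eq_integral do rewrite sqnorm0; rewrite integral0.
- exact: aeW.
Qed.

Lemma ae_eq0_Gam w : in_L2ep w ->
  (forall T, 0 <= T -> ae_equal (Gam T w) (fun _ => 0)) -> ae_equal w (fun _ => 0).
Proof.
move=> hw GamT_ae0.
have : \forall t \ae mu, forall k : nat, Gam k%:R w t = 0.
  by apply: ae_foralln => k; exact: GamT_ae0.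
move/filterS2: (hw 0 (lexx 0)).2; apply => t w0 wk0.
have [t_lt0|t_ge0] := ltrP t 0; first by have := w0 t_lt0; rewrite /Gam ltW.
by have := wk0 (Num.trunc t).+1; rewrite /Gam ltW ?truncnS_gt.
Qed.

End Signals.

Section Systems.
Variables (R : realType) (n : nat).
Notation sig := (signal R n).
Implicit Types (P : sig -> sig) (u v : sig).

Definition gain_domain P := [set u | in_L2p u /\ l2norm u != 0 /\ l2norm (P u) != 0].

Definition gain_cosines P := [set cos_angle u (P u) | u in gain_domain P].

Lemma singular_angleE P : singular_angle P = acos (inf (gain_cosines P)).
Proof. by []. Qed.

Lemma system_ae0 P v : is_system P -> in_L2ep v -> ae_equal v (fun _ => 0) ->
  ae_equal (P v) (fun _ => 0).
Proof.
move=> [_ [P_ae [P0 _]]] hv v0.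
exact: ae_equal_trans (P_ae _ _ hv (@in_L2ep0 R n) v0) P0.
Qed.

Lemma causal_comp P1 P2 : is_system P1 -> is_system P2 -> causal P1 -> causal P2 ->
  causal (P2 \o P1).
Proof.
move=> [sys1 _] [_ [P2_ae _]] caus1 caus2 u hu T T_ge0 /=.
have hP1u := sys1 u hu.
have hP1Gu := sys1 _ (in_L2ep_Gam T_ge0 hu).
apply: ae_equal_trans (caus2 _ hP1u T T_ge0) _.
apply: ae_equal_trans (ae_equal_sym (caus2 _ hP1Gu T T_ge0)).
by apply/ae_equal_Gam/P2_ae; [exact: in_L2ep_Gam | exact: in_L2ep_Gam | exact: caus1].
Qed.

Lemma gain_domain_nonempty P : is_system P -> causal P ->
  (forall u, in_L2p u -> in_L2p (P u)) -> gain_domain P !=set0.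
Proof.
move=> sysP causP stP; have [P_L2ep [_ [_ [u [hu Pu_neq0]]]]] := sysP.
have [T [T_ge0 GamPu_neq0]] : exists T, 0 <= T /\ ~ ae_equal (Gam T (P u)) (fun _ => 0).
  apply: contrapT => noT; apply/Pu_neq0/ae_eq0_Gam; first exact: P_L2ep.
  by move=> T T_ge0; apply: contrapT => GamT_neq0; apply: noT; exists T.
have hv : in_L2p (Gam T u) := hu T T_ge0.
have Pv_neq0 : ~ ae_equal (P (Gam T u)) (fun _ => 0).
  move=> Pv0; apply: GamPu_neq0; apply: ae_equal_trans (causP u hu T T_ge0) _.
  by rewrite -(Gam0 n T); exact: ae_equal_Gam.
exists (Gam T u); split => //; split; apply/eqP.
- move/(l2norm_eq0 hv.1) => v0; apply/Pv_neq0/system_ae0 => //.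
  exact: in_L2p_L2ep.
- by move/(l2norm_eq0 (stP _ hv).1).
Qed.

Lemma gain_domain_comp P1 P2 u : is_system P2 ->
  (forall u, in_L2p u -> in_L2p (P1 u)) -> (forall u, in_L2p u -> in_L2p (P2 u)) ->
  gain_domain (P2 \o P1) u -> gain_domain P1 u /\ gain_domain P2 (P1 u).
Proof.
move=> sys2 st1 st2 [hu [u_neq0 Pu_neq0]].
have hP1u := st1 u hu.
suff P1u_neq0 : l2norm (P1 u) != 0 by split; split.
apply/eqP => /(l2norm_eq0 hP1u.1) P1u0; move/eqP: Pu_neq0; apply.
apply/(l2norm_eq0 (st2 _ hP1u).1)/system_ae0 => //.
exact: in_L2p_L2ep.
Qed.

Lemma gain_cosines_unit P : (forall u, in_L2p u -> in_L2p (P u)) ->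
  forall y, gain_cosines P y -> -1 <= y <= 1.
Proof.
move=> stP _ [u [hu [u_neq0 Pu_neq0]] <-].
by apply: cos_angle_bound => //; [case: hu | case: (stP u hu)].
Qed.

End Systems.

Theorem proposition1 (R : realType) (n : nat) (hn : (0 < n)%N)
  (P1 P2 : signal R n -> signal R n) :
  causal_stable_system P1 -> causal_stable_system P2 ->
  is_system (P2 \o P1) ->
  singular_angle (P2 \o P1) <= singular_angle P1 + singular_angle P2.
Proof.
move=> [sys1 caus1 [st1 _]] [sys2 caus2 [st2 _]] sys.
have st u : in_L2p u -> in_L2p ((P2 \o P1) u) by move=> /st1 /st2.
rewrite !singular_angleE; apply: (acos_inf_le (gain_cosines_unit st)).
  have [u hu] := gain_domain_nonempty sys (causal_comp sys1 sys2 caus1 caus2) st.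
  by exists (cos_angle u ((P2 \o P1) u)), u.
move=> _ [u hu <-]; have [hu1 hu2] := gain_domain_comp sys2 st1 st2 hu.
have cos1 : gain_cosines P1 (cos_angle u (P1 u)) by exists u.
have cos2 : gain_cosines P2 (cos_angle (P1 u) (P2 (P1 u))) by exists (P1 u).
apply: le_trans (lerD (acos_le_acos_inf (gain_cosines_unit st1) cos1)
                      (acos_le_acos_inf (gain_cosines_unit st2) cos2)).
case: hu1 hu2 => [hu_L2p [u_neq0 _]] [hP1u_L2p [P1u_neq0 Pu_neq0]].
exact: angle_triangle hu_L2p.1 hP1u_L2p.1 (st2 _ hP1u_L2p).1 u_neq0 P1u_neq0 Pu_neq0.
Qed.
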